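(* For integers $0\le a<b$ let $p_{a,b}(\lambda)=\lambda^b-\lambda^a-1$. Consider two distinct such trinomials $p_{a_1,b_1}$ and $p_{a_2,b_2}$ with $0\le a_1<a_2$. They have a common root $\lambda\ge 1.05$ if and only if one of the following holds: (a) $(a_1,b_1)=(1,3)$ and $(a_2,b_2)=(4,5)$ (which are mutually prime), in which case the common root is $\lambda=\sigma$, the plastic number; (b) $(a_1,b_1)=(m,3m)$ and $(a_2,b_2)=(4m,5m)$ for some $m\in\{2,3,4,5\}$, in which case the common root is $\lambda=\sigma^{1/m}$.
   Context: The plastic number $\sigma=\frac{\sqrt[3]{9+\sqrt{69}}+\sqrt[3]{9-\sqrt{69}}}{\sqrt[3]{18}}\approx 1.325$ is the unique real root of $x^3-x-1=0$; it also satisfies $\sigma^5-\sigma^4-1=0$. *)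

From Stdlib Require Import Reals Lra Lia.
Open Scope R_scope.

Definition ptri (a b : nat) (x : R) : R := x ^ b - x ^ a - 1.

Definition cbrt_pos (x : R) : R := Rpower x (1 / 3).

(* The plastic number, by the explicit formula of the paper
   (both 9 + sqrt 69 and 9 - sqrt 69 are positive). *)
Definition plastic : R :=
  (cbrt_pos (9 + sqrt 69) + cbrt_pos (9 - sqrt 69)) / cbrt_pos 18.

Definition common_root (a1 b1 a2 b2 : nat) (l : R) : Prop :=
  ptri a1 b1 l = 0 /\ ptri a2 b2 l = 0.

From Stdlib Require Import Reals Lra Lia ZArith List Bool.
Open Scope R_scope.

(* Writing b = a + d, a root l >= 1 of p_{a,b} is a solution of
   l^a (l^d - 1) = 1, whose left side is increasing in l, a and d on [1, oo).
   Hence l >= 1.05 forces a < 62 and d < 15, and for each of the remaining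
   pairs (a, d) the root is located by exact integer arithmetic in an
   interval of width 2^-20.  Two distinct pairs whose intervals overlap turn
   out to be exactly (m, 2m) and (4m, m); for those, l^m is a root of both
   x^3 - x - 1 and x^5 - x^4 - 1 = (x^3 - x - 1)(x^2 - x + 1), hence l^m is
   the plastic number. *)

Definition tri (a d : nat) (x : R) : R := x ^ a * (x ^ d - 1).

Lemma ptri_root_tri a b l : (a < b)%nat -> ptri a b l = 0 -> tri a (b - a) l = 1.
Proof.
  intros Hab Hp. unfold ptri in Hp. unfold tri.
  replace b with (a + (b - a))%nat in Hp by lia.
  rewrite pow_add in Hp. lra.
Qed.

Lemma pow_lt_pow_l x y n : (0 < n)%nat -> 0 <= x < y -> x ^ n < y ^ n.
Proof.
  intros Hn [Hx Hxy]. destruct n as [|k]; [lia|]. simpl.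
  assert (x ^ k <= y ^ k) by (apply pow_incr; lra).
  assert (0 < y ^ k) by (apply pow_lt; lra).
  assert (0 <= x ^ k) by (apply pow_le; lra).
  nra.
Qed.

Lemma tri_le_mono a a' d d' x y :
  (a <= a')%nat -> (d <= d')%nat -> 1 <= x <= y -> tri a d x <= tri a' d' y.
Proof.
  intros Ha Hd [Hx Hxy]. unfold tri.
  assert (x ^ a <= y ^ a') by
    (apply Rle_trans with (y ^ a); [apply pow_incr | apply Rle_pow]; lra || lia).
  assert (x ^ d <= y ^ d') by
    (apply Rle_trans with (y ^ d); [apply pow_incr | apply Rle_pow]; lra || lia).
  assert (1 <= x ^ d) by (apply pow_R1_Rle; lra).
  assert (0 <= x ^ a) by (apply pow_le; lra).
  apply Rmult_le_compat; lra.
Qed.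

Lemma tri_lt_mono a d x y : (1 <= d)%nat -> 1 <= x < y -> tri a d x < tri a d y.
Proof.
  intros Hd [Hx Hxy]. unfold tri.
  assert (x ^ d < y ^ d) by (apply pow_lt_pow_l; lra || lia).
  assert (1 <= x ^ d) by (apply pow_R1_Rle; lra).
  assert (x ^ a <= y ^ a) by (apply pow_incr; lra).
  assert (1 <= x ^ a) by (apply pow_R1_Rle; lra).
  nra.
Qed.

Lemma tri_root_between a d r s l :
  (1 <= d)%nat -> 1 <= r -> 1 <= s -> 1 <= l ->
  tri a d r < 1 -> 1 <= tri a d s -> tri a d l = 1 -> r < l <= s.
Proof.
  intros Hd Hr Hs Hl Hlo Hhi Hroot. split.
  - apply Rnot_le_lt. intros Hlr.
    assert (tri a d l <= tri a d r) by (apply tri_le_mono; lia || lra). lra.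
  - apply Rnot_lt_le. intros Hsl.
    assert (tri a d s < tri a d l) by (apply tri_lt_mono; lia || lra). lra.
Qed.

Definition tri_num (a d : nat) (p q : Z) : Z :=
  (p ^ Z.of_nat a * (p ^ Z.of_nat d - q ^ Z.of_nat d))%Z.

Lemma tri_IZR_scaled a d p q : (0 < q)%Z ->
  tri a d (IZR p / IZR q) * IZR (q ^ Z.of_nat (a + d)) = IZR (tri_num a d p q).
Proof.
  intros Hq. assert (IZR q <> 0) by (apply not_0_IZR; lia).
  unfold tri, tri_num. rewrite mult_IZR, minus_IZR, <- !pow_IZR, pow_add.
  unfold Rdiv. rewrite !Rpow_mult_distr, !pow_inv.
  field. split; apply pow_nonzero; exact H.
Qed.

Lemma tri_IZR_lt_1 a d p q : (0 < q)%Z ->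
  tri a d (IZR p / IZR q) < 1 <-> (tri_num a d p q < q ^ Z.of_nat (a + d))%Z.
Proof.
  intros Hq. pose proof (tri_IZR_scaled a d p q Hq) as E.
  assert (0 < IZR (q ^ Z.of_nat (a + d))) by (apply IZR_lt, Z.pow_pos_nonneg; lia).
  split; intros H'.
  - apply lt_IZR. rewrite <- E. nra.
  - apply IZR_lt in H'. rewrite <- E in H'. nra.
Qed.

Lemma tri_IZR_le_1 a d p q : (0 < q)%Z ->
  tri a d (IZR p / IZR q) <= 1 <-> (tri_num a d p q <= q ^ Z.of_nat (a + d))%Z.
Proof.
  intros Hq. pose proof (tri_IZR_scaled a d p q Hq) as E.
  assert (0 < IZR (q ^ Z.of_nat (a + d))) by (apply IZR_lt, Z.pow_pos_nonneg; lia).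
  split; intros H'.
  - apply le_IZR. rewrite <- E. nra.
  - apply IZR_le in H'. rewrite <- E in H'. nra.
Qed.

Lemma IZR_div_ge_1 p q : (0 < q <= p)%Z -> 1 <= IZR p / IZR q.
Proof.
  intros Hqp.
  assert (0 < IZR q) by (apply IZR_lt; lia).
  assert (IZR q <= IZR p) by (apply IZR_le; lia).
  apply Rmult_le_reg_r with (IZR q); [exact H|].
  unfold Rdiv. rewrite Rmult_assoc, Rinv_l, Rmult_1_r; lra.
Qed.

Lemma IZR_div_cell_unique n1 n2 q l : (0 < q)%Z ->
  IZR n1 / IZR q < l <= IZR (n1 + 1) / IZR q ->
  IZR n2 / IZR q < l <= IZR (n2 + 1) / IZR q -> n1 = n2.
Proof.
  intros Hq H1 H2.
  assert (Q : 0 < IZR q) by (apply IZR_lt; exact Hq).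
  assert (lt_of_div : forall x y, IZR x / IZR q < IZR y / IZR q -> (x < y)%Z).
  { intros x y H. apply lt_IZR. apply Rmult_lt_reg_r with (/ IZR q); [|exact H].
    apply Rinv_0_lt_compat, Q. }
  assert (n1 < n2 + 1)%Z by (apply lt_of_div; lra).
  assert (n2 < n1 + 1)%Z by (apply lt_of_div; lra).
  lia.
Qed.

Definition scale : Z := 2 ^ 20.

Lemma scale_pos : (0 < scale)%Z.
Proof. reflexivity. Qed.

Definition below_root (a d : nat) (n : Z) : bool :=
  (tri_num a d n scale <? scale ^ Z.of_nat (a + d))%Z.

Fixpoint bisect (f : Z -> bool) (fuel : nat) (lo hi : Z) : Z :=
  match fuel with
  | O => lo
  | S k =>
      let mid := ((lo + hi) / 2)%Z in
      if f mid then bisect f k mid hi else bisect f k lo mid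
  end.

(* Roots with d >= 1 lie in [1, 2], and twenty halvings of [scale, 2 scale]
   leave a unit interval [n, n + 1].  The bisection itself is not verified:
   its result is certified by [cell_ok]. *)
Definition cell (a d : nat) : Z := bisect (below_root a d) 20 scale (2 * scale).

Definition cell_ok (a d : nat) (n : Z) : bool :=
  (scale <=? n)%Z && below_root a d n && negb (below_root a d (n + 1)).

(* [tri a d (21/20) <= 1] is the condition for the root to be >= 21/20. *)
Definition candidates : list (nat * nat) :=
  filter (fun '(a, d) => (tri_num a d 21 20 <=? 20 ^ Z.of_nat (a + d))%Z)
    (list_prod (seq 0 62) (seq 1 14)).

Definition cell_table : list (nat * nat * Z) :=
  map (fun '(a, d) => (a, d, cell a d)) candidates.

Definition exceptional (a1 d1 a2 d2 : nat) : bool :=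
  existsb (fun m => (a1 =? m) && (d1 =? 2 * m) && (a2 =? 4 * m) && (d2 =? m))%nat
    (seq 1 5).

Definition collisions_exceptional (T : list (nat * nat * Z)) : bool :=
  forallb (fun '(a1, d1, n1) =>
    forallb (fun '(a2, d2, n2) =>
      implb ((a1 <? a2)%nat && (n1 =? n2)%Z) (exceptional a1 d1 a2 d2)) T) T.

Lemma cell_table_ok : forallb (fun '(a, d, n) => cell_ok a d n) cell_table = true.
Proof. vm_compute. reflexivity. Qed.

Lemma cell_table_collisions : collisions_exceptional cell_table = true.
Proof. vm_compute. reflexivity. Qed.

Lemma root_candidate a d l :
  (1 <= d)%nat -> 21 / 20 <= l -> tri a d l = 1 -> In (a, d) candidates.
Proof.
  intros Hd Hl Hroot.
  assert (H : tri a d (21 / 20) <= 1) by (rewrite <- Hroot; apply tri_le_mono; lia || lra).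
  assert (Ha : (a < 62)%nat).
  { apply Nat.nlt_ge. intros Ha.
    assert (H' : tri 62 1 (21 / 20) <= 1)
      by (eapply Rle_trans; [apply tri_le_mono | exact H]; lia || lra).
    apply tri_IZR_le_1 in H'; [|lia]. vm_compute in H'. congruence. }
  assert (Hd' : (d < 15)%nat).
  { apply Nat.nlt_ge. intros Hd'.
    assert (H' : tri 0 15 (21 / 20) <= 1)
      by (eapply Rle_trans; [apply tri_le_mono | exact H]; lia || lra).
    apply tri_IZR_le_1 in H'; [|lia]. vm_compute in H'. congruence. }
  apply filter_In. split.
  - apply in_prod; apply in_seq; lia.
  - apply Z.leb_le, tri_IZR_le_1; [lia | exact H].
Qed.

(* Stated for an arbitrary [n], like [collisions_exceptional_In]: the kernel
   must never unfold [cell a d] for symbolic [a] and [d], where the bisection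
   expands into 2^20 branches. *)
Lemma cell_ok_encloses_root a d n l : (1 <= d)%nat -> 1 <= l ->
  cell_ok a d n = true -> tri a d l = 1 ->
  IZR n / IZR scale < l <= IZR (n + 1) / IZR scale.
Proof.
  intros Hd Hl Hok Hroot. pose proof scale_pos as Hscale.
  unfold cell_ok, below_root in Hok.
  rewrite !andb_true_iff, negb_true_iff, Z.leb_le, Z.ltb_lt, Z.ltb_ge in Hok.
  destruct Hok as [[Hge Hbelow] Habove].
  apply (tri_root_between a d); try assumption.
  - apply IZR_div_ge_1. lia.
  - apply IZR_div_ge_1. lia.
  - apply tri_IZR_lt_1; assumption.
  - apply Rnot_lt_le. rewrite tri_IZR_lt_1 by exact Hscale. lia.
Qed.

Lemma in_cell_table a d : In (a, d) candidates -> In (a, d, cell a d) cell_table.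
Proof. exact (in_map (fun '(a, d) => (a, d, cell a d)) candidates (a, d)). Qed.

Lemma cell_encloses_root a d l : (1 <= d)%nat -> 1 <= l ->
  In (a, d) candidates -> tri a d l = 1 ->
  IZR (cell a d) / IZR scale < l <= IZR (cell a d + 1) / IZR scale.
Proof.
  intros Hd Hl Hin Hroot. apply (cell_ok_encloses_root a d); try assumption.
  pose proof cell_table_ok as Hok. rewrite forallb_forall in Hok.
  exact (Hok _ (in_cell_table a d Hin)).
Qed.

Lemma collisions_exceptional_In T a1 d1 n1 a2 d2 n2 :
  collisions_exceptional T = true -> In (a1, d1, n1) T -> In (a2, d2, n2) T ->
  (a1 < a2)%nat -> n1 = n2 -> exceptional a1 d1 a2 d2 = true.
Proof.
  intros H I1 I2 Ha <-. unfold collisions_exceptional in H.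
  rewrite forallb_forall in H. specialize (H _ I1). cbv beta iota in H.
  rewrite forallb_forall in H. specialize (H _ I2). cbv beta iota in H.
  rewrite (proj2 (Nat.ltb_lt _ _) Ha), Z.eqb_refl in H. exact H.
Qed.

Lemma candidates_collision a1 d1 a2 d2 :
  In (a1, d1) candidates -> In (a2, d2) candidates -> (a1 < a2)%nat ->
  cell a1 d1 = cell a2 d2 -> exceptional a1 d1 a2 d2 = true.
Proof.
  intros I1 I2 Ha Hc.
  exact (collisions_exceptional_In _ _ _ _ _ _ _ cell_table_collisions
    (in_cell_table _ _ I1) (in_cell_table _ _ I2) Ha Hc).
Qed.

Lemma exceptional_spec a1 d1 a2 d2 : exceptional a1 d1 a2 d2 = true ->
  exists m, (1 <= m <= 5)%nat /\
    a1 = m /\ d1 = (2 * m)%nat /\ a2 = (4 * m)%nat /\ d2 = m.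
Proof.
  unfold exceptional. rewrite existsb_exists. intros [m [Hm E]].
  apply in_seq in Hm. rewrite !andb_true_iff, !Nat.eqb_eq in E.
  exists m. lia.
Qed.

Lemma common_root_shape a1 b1 a2 b2 l :
  (a1 < b1)%nat -> (a2 < b2)%nat -> (a1 < a2)%nat ->
  21 / 20 <= l -> common_root a1 b1 a2 b2 l ->
  exists m, (1 <= m <= 5)%nat /\
    a1 = m /\ b1 = (3 * m)%nat /\ a2 = (4 * m)%nat /\ b2 = (5 * m)%nat.
Proof.
  intros h1 h2 h12 Hl [H1 H2].
  apply ptri_root_tri in H1; [|exact h1].
  apply ptri_root_tri in H2; [|exact h2].
  assert (Hd1 : (1 <= b1 - a1)%nat) by lia.
  assert (Hd2 : (1 <= b2 - a2)%nat) by lia.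
  pose proof (root_candidate _ _ _ Hd1 Hl H1) as I1.
  pose proof (root_candidate _ _ _ Hd2 Hl H2) as I2.
  assert (Hcell : cell a1 (b1 - a1) = cell a2 (b2 - a2)).
  { apply (IZR_div_cell_unique _ _ scale l scale_pos);
      apply cell_encloses_root; lra || assumption. }
  destruct (exceptional_spec _ _ _ _ (candidates_collision _ _ _ _ I1 I2 h12 Hcell))
    as [m Hm].
  exists m. lia.
Qed.

Lemma pow_Rpower_inv x m : 0 < x -> m <> 0%nat -> Rpower x (1 / INR m) ^ m = x.
Proof.
  intros Hx Hm.
  rewrite <- Rpower_pow by (unfold Rpower; apply exp_pos).
  rewrite Rpower_mult.
  replace (1 / INR m * INR m) with 1 by (field; apply not_0_INR, Hm).
  apply Rpower_1, Hx.
Qed.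

Lemma Rpower_inv_pow l m : 0 < l -> m <> 0%nat -> Rpower (l ^ m) (1 / INR m) = l.
Proof.
  intros Hl Hm.
  rewrite <- Rpower_pow, Rpower_mult by exact Hl.
  replace (INR m * (1 / INR m)) with 1 by (field; apply not_0_INR, Hm).
  apply Rpower_1, Hl.
Qed.

Lemma cbrt_pos_Rpower x : cbrt_pos x = Rpower x (1 / INR 3).
Proof. unfold cbrt_pos. f_equal. simpl. lra. Qed.

Lemma plastic_pos : 0 < plastic.
Proof.
  unfold plastic, cbrt_pos, Rpower.
  apply Rdiv_lt_0_compat; [apply Rplus_lt_0_compat|]; apply exp_pos.
Qed.

Lemma plastic_cube : plastic ^ 3 = plastic + 1.
Proof.
  assert (Hs : 0 <= sqrt 69) by apply sqrt_pos.
  assert (Hs2 : sqrt 69 * sqrt 69 = 69) by (apply sqrt_sqrt; lra).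
  assert (Hs9 : sqrt 69 < 9) by nra.
  unfold plastic. rewrite !cbrt_pos_Rpower.
  set (u := Rpower (9 + sqrt 69) (1 / INR 3)).
  set (v := Rpower (9 - sqrt 69) (1 / INR 3)).
  set (w := Rpower 18 (1 / INR 3)).
  assert (Hu : u ^ 3 = 9 + sqrt 69) by (apply pow_Rpower_inv; lra || lia).
  assert (Hv : v ^ 3 = 9 - sqrt 69) by (apply pow_Rpower_inv; lra || lia).
  assert (Hw : w ^ 3 = 18) by (apply pow_Rpower_inv; lra || lia).
  assert (Hw0 : 0 < w) by apply exp_pos.
  assert (Huvw : u * v * w = 6).
  { unfold u, v, w. rewrite !Rpower_mult_distr by nra.
    replace ((9 + sqrt 69) * (9 - sqrt 69) * 18) with (6 ^ 3) by nra.
    apply Rpower_inv_pow; lra || lia. }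
  (* Cardano: (u + v)^3 = u^3 + v^3 + 3uv(u + v), with u^3 + v^3 = w^3
     and 3uv = w^2. *)
  assert (Huv : 3 * u * v = w ^ 2).
  { apply Rmult_eq_reg_r with w; [|lra].
    replace (3 * u * v * w) with (3 * (u * v * w)) by ring.
    replace (w ^ 2 * w) with (w ^ 3) by ring. lra. }
  assert (E : (u + v) ^ 3 = w ^ 3 + w ^ 2 * (u + v)).
  { transitivity (u ^ 3 + v ^ 3 + 3 * u * v * (u + v)); [ring|].
    rewrite Hu, Hv, Huv, Hw. lra. }
  unfold Rdiv. rewrite Rpow_mult_distr, pow_inv, E. field. lra.
Qed.

Lemma plastic_gt : 13 / 10 < plastic.
Proof. pose proof plastic_cube as Hc. pose proof plastic_pos. simpl in Hc. nra. Qed.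

Lemma plastic_unique x : 0 < x -> x ^ 3 = x + 1 -> x = plastic.
Proof.
  intros Hx Hc. pose proof plastic_cube as Hp. pose proof plastic_gt.
  assert (13 / 10 < x) by (simpl in Hc; nra).
  assert (E : (x - plastic) * (x ^ 2 + x * plastic + plastic ^ 2 - 1) = 0)
    by (transitivity ((x ^ 3 - x) - (plastic ^ 3 - plastic)); [ring | lra]).
  apply Rmult_integral in E as [E|E]; nra.
Qed.

Lemma plastic_root_common m : (1 <= m <= 5)%nat ->
  105 / 100 <= Rpower plastic (1 / INR m) /\
  common_root m (3 * m) (4 * m) (5 * m) (Rpower plastic (1 / INR m)).
Proof.
  intros Hm. pose proof plastic_cube as Hc. pose proof plastic_gt.
  set (l := Rpower plastic (1 / INR m)).
  assert (Hlm : l ^ m = plastic) by (apply pow_Rpower_inv; lra || lia).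
  split.
  - apply Rnot_lt_le. intros Hl.
    assert (l ^ m <= (105 / 100) ^ m)
      by (apply pow_incr; split; [unfold l, Rpower; apply Rlt_le, exp_pos | lra]).
    assert ((105 / 100) ^ m <= (105 / 100) ^ 5) by (apply Rle_pow; lra || lia).
    assert ((105 / 100) ^ 5 < 13 / 10) by (simpl; lra).
    lra.
  - unfold common_root, ptri.
    rewrite (Nat.mul_comm 3 m), (Nat.mul_comm 4 m), (Nat.mul_comm 5 m), !pow_mult, Hlm.
    split; [lra|].
    replace (plastic ^ 5 - plastic ^ 4 - 1)
      with ((plastic ^ 3 - plastic - 1) * (plastic ^ 2 - plastic + 1)) by ring.
    rewrite Hc. ring.
Qed.

Lemma family_root_eq m l : (1 <= m)%nat -> 0 < l -> ptri m (3 * m) l = 0 ->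
  l = Rpower plastic (1 / INR m).
Proof.
  intros Hm Hl Hp. unfold ptri in Hp. rewrite (Nat.mul_comm 3 m), pow_mult in Hp.
  assert (E : l ^ m = plastic) by (apply plastic_unique; [apply pow_lt, Hl | lra]).
  rewrite <- E. symmetry. apply Rpower_inv_pow; lra || lia.
Qed.

Theorem lemma1 (a1 b1 a2 b2 : nat)
  (h1 : (a1 < b1)%nat) (h2 : (a2 < b2)%nat) (h12 : (a1 < a2)%nat) :
  ((exists l : R, 105 / 100 <= l /\ common_root a1 b1 a2 b2 l) <->
   ((a1 = 1 /\ b1 = 3 /\ a2 = 4 /\ b2 = 5)%nat \/
    exists m : nat, (2 <= m <= 5)%nat /\
      (a1 = m /\ b1 = 3 * m /\ a2 = 4 * m /\ b2 = 5 * m)%nat)) /\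
  (forall l : R, 105 / 100 <= l -> common_root a1 b1 a2 b2 l ->
     ((a1 = 1 /\ b1 = 3 /\ a2 = 4 /\ b2 = 5)%nat -> l = plastic) /\
     (forall m : nat, (2 <= m <= 5)%nat ->
        (a1 = m /\ b1 = 3 * m /\ a2 = 4 * m /\ b2 = 5 * m)%nat ->
        l = Rpower plastic (1 / INR m))).
Proof.
  split; [split|].
  - intros [l [Hl Hc]].
    destruct (common_root_shape _ _ _ _ l h1 h2 h12 ltac:(lra) Hc) as [m [Hm E]].
    destruct (Nat.eq_dec m 1) as [->|]; [left | right; exists m]; lia.
  - intros Hcase.
    assert (exists m, (1 <= m <= 5)%nat /\
              a1 = m /\ b1 = (3 * m)%nat /\ a2 = (4 * m)%nat /\ b2 = (5 * m)%nat)
      as [m [Hm [-> [-> [-> ->]]]]]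
      by (destruct Hcase as [|[m]]; [exists 1%nat | exists m]; lia).
    exists (Rpower plastic (1 / INR m)). exact (plastic_root_common m Hm).
  - intros l Hl [H1 _]. split.
    + intros [-> [-> _]].
      rewrite (family_root_eq 1 l) by (lia || lra || exact H1).
      replace (1 / INR 1) with 1 by (simpl; field).
      apply Rpower_1, plastic_pos.
    + intros m Hm [-> [-> _]]. apply family_root_eq; lia || lra || exact H1.
Qed.
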